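(* Let $A=(a_{ij})$ be an $n\times n$ symmetric matrix with nonnegative entries and zero diagonal (the weighted adjacency matrix of an undirected edge-weighted graph without self-loops on vertex set $V=\{1,\dots,n\}$). Let $S\subseteq V$ with $S\neq\emptyset$, and define $$\gamma_S=\max_{\mathbf{x}\in\Delta_{V\setminus S}}\ \min_{i\in S}\ \frac{\mathbf{x}'A\mathbf{x}-(A\mathbf{x})_i}{\mathbf{x}'\mathbf{x}}.$$ Let $\alpha>\gamma_S$. If $\mathbf{x}$ is a local maximizer of $f_S^\alpha(\mathbf{x})=\mathbf{x}'(A-\alpha\hat I_S)\mathbf{x}$ over $\Delta$, then $\sigma(\mathbf{x})\cap S\neq\emptyset$.
   Context: $\Delta=\{\mathbf{x}\in\mathbb{R}^n:\sum_i x_i=1,\ x_i\ge 0\}$ is the standard simplex; for $T\subseteq V$, $\Delta_T=\{\mathbf{x}\in\Delta:\sigma(\mathbf{x})\subseteq T\}$, where $\sigma(\mathbf{x})=\{i\in V: x_i>0\}$ is the support. $\hat I_S$ is the $n\times n$ diagonal matrix whose diagonal entries are $1$ at indices in $V\setminus S$ and $0$ at indices in $S$. A prime denotes transposition. *)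

From HB Require Import structures.
From mathcomp Require Import all_boot all_order all_algebra.
From mathcomp Require Import classical_sets reals.
Set Implicit Arguments. Unset Strict Implicit. Unset Printing Implicit Defensive.
Import Order.TTheory GRing.Theory Num.Theory.
Local Open Scope ring_scope.

Section Defs.
Variables (R : realType) (n : nat).

Definition supp (x : 'cV[R]_n) : {set 'I_n} := [set i | 0 < x i 0].

Definition in_simplex (x : 'cV[R]_n) : Prop :=
  (forall i, 0 <= x i 0) /\ \sum_i x i 0 = 1.

Definition in_simplex_on (T : {set 'I_n}) (x : 'cV[R]_n) : Prop :=
  in_simplex x /\ supp x \subset T.

Definition hatI (S : {set 'I_n}) : 'M[R]_n :=
  \matrix_(i, j) (((i == j) && (i \notin S))%:R).

Definition qform (M : 'M[R]_n) (x : 'cV[R]_n) : R := (x^T *m M *m x) 0 0.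

(* minimum of F over a (nonempty) set S; 0 if S is empty *)
Definition minS (S : {set 'I_n}) (F : 'I_n -> R) : R :=
  match [pick i in S] with
  | Some i0 => \big[Num.min/F i0]_(i in S) F i
  | None => 0
  end.

Definition ratio (A : 'M[R]_n) (x : 'cV[R]_n) (i : 'I_n) : R :=
  (qform A x - (A *m x) i 0) / qform 1%:M x.

(* gamma_S = max_{x in Delta_{V\S}} min_{i in S} ratio (taken as a supremum) *)
Definition gammaS (A : 'M[R]_n) (S : {set 'I_n}) : R :=
  sup [set minS S (ratio A x) | x in in_simplex_on (~: S)]%classic.

Definition fSa (A : 'M[R]_n) (S : {set 'I_n}) (alpha : R) (x : 'cV[R]_n) : R :=
  qform (A - alpha *: hatI S) x.

Definition local_max_simplex (f : 'cV[R]_n -> R) (x : 'cV[R]_n) : Prop :=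
  in_simplex x /\
  exists2 eps : R, 0 < eps &
    forall y : 'cV[R]_n, in_simplex y ->
      (forall i, `|y i 0 - x i 0| < eps) -> f y <= f x.

End Defs.

(* If the support of x missed S, x would lie in Delta_{V\S}, so by the
   definition of gamma_S some i in S satisfies x'Ax - alpha x'x < (Ax)_i.
   On such x, f_S^alpha(x) = x'Ax - alpha x'x, and moving a little mass t
   from x to the vertex e_i (which hat I_S annihilates and where A has zero
   diagonal) changes f_S^alpha by t (2 ((Ax)_i - f(x)) - t (2 (Ax)_i - f(x))),
   which is positive for small t: x is not a local maximizer.  The set whose
   supremum is gamma_S is bounded above (so the supremum really bounds it),
   because x'Ax <= (sum of the entries of A) x'x for x >= 0. *)

From Pilot Require Import Defs.
From HB Require Import structures.
From mathcomp Require Import all_boot all_order all_algebra.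
From mathcomp Require Import classical_sets reals.
From mathcomp Require Import ring lra.
Import Order.TTheory GRing.Theory Num.Theory.
Set Implicit Arguments. Unset Strict Implicit. Unset Printing Implicit Defensive.
Local Open Scope ring_scope.

Section QuadraticForms.
Variables (R : realType) (n : nat).
Implicit Types (M : 'M[R]_n) (u v : 'cV[R]_n).

Lemma qform_combine M u v (a b : R) :
  qform M (a *: u + b *: v) =
  a ^+ 2 * qform M u + a * b * ((u^T *m M *m v) 0 0 + (v^T *m M *m u) 0 0)
  + b ^+ 2 * qform M v.
Proof.
rewrite /qform [(_ + _)^T]linearD /= ![(_ *: _)^T]linearZ /=.
rewrite !(mulmxDl, mulmxDr) -!(scalemxAl, scalemxAr).
(* Freeze the 1x1 products so that [mxE] only unfolds the outer combination. *)
set uu := u^T *m M *m u; set uv := u^T *m M *m v.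
set vu := v^T *m M *m u; set vv := v^T *m M *m v.
rewrite !mxE; ring.
Qed.

Lemma bilinear_sym M : M^T = M ->
  forall u v, (v^T *m M *m u) 0 0 = (u^T *m M *m v) 0 0.
Proof.
move=> symM u v; have -> : (v^T *m M *m u) 0 0 = (v^T *m M *m u)^T 0 0 by rewrite [RHS]mxE.
by rewrite !trmx_mul trmxK symM mulmxA.
Qed.

Lemma bilinear_delta M u (i : 'I_n) :
  (u^T *m M *m (delta_mx i 0 : 'cV_n)) 0 0 = (M^T *m u) i 0.
Proof. by rewrite -colE -[u^T *m M]trmxK trmx_mul trmxK !mxE. Qed.

Lemma qform_delta M (i : 'I_n) : qform M (delta_mx i 0) = M i i.
Proof. by rewrite /qform trmx_delta -rowE -colE !mxE. Qed.

Lemma qform_segment M u (i : 'I_n) (t : R) : M^T = M ->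
  qform M ((1 - t) *: u + t *: delta_mx i 0) =
  (1 - t) ^+ 2 * qform M u + 2 * t * (1 - t) * (M *m u) i 0 + t ^+ 2 * M i i.
Proof.
move=> symM; rewrite qform_combine (bilinear_sym symM u) bilinear_delta symM qform_delta.
ring.
Qed.

Lemma qform1E u : qform 1%:M u = \sum_k u k 0 ^+ 2.
Proof. by rewrite /qform mulmx1 mxE; apply: eq_bigr => k _; rewrite mxE expr2. Qed.

End QuadraticForms.

Section Simplex.
Variables (R : realType) (n : nat).
Implicit Types (x : 'cV[R]_n) (T : {set 'I_n}).

Lemma simplex_le1 x j : in_simplex x -> x j 0 <= 1.
Proof. by case=> x0 <-; rewrite (bigD1 j) //= lerDl sumr_ge0. Qed.

Lemma qform1_simplex_gt0 x : in_simplex x -> 0 < qform 1%:M x.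
Proof.
case=> x0 x1; rewrite qform1E lt_def sumr_ge0 ?andbT => [|k _]; last exact: sqr_ge0.
apply: contra_eqN x1; rewrite psumr_eq0 => [/allP x2_0|k _]; last exact: sqr_ge0.
rewrite big1 1?eq_sym ?oner_neq0 // => k _; apply/eqP; rewrite -sqrf_eq0.
exact: x2_0 (mem_index_enum k).
Qed.

Lemma simplex_on_vanish T x j : in_simplex_on T x -> j \notin T -> x j 0 = 0.
Proof.
case=> [[x0 _] /fintype.subsetP suppT] jT; apply/eqP; rewrite eq_le x0 andbT leNgt.
by apply: contra jT => xj; apply: suppT; rewrite inE.
Qed.

Lemma simplex_on_setC x (S : {set 'I_n}) :
  in_simplex x -> supp x :&: S = finset.set0 -> in_simplex_on (~: S) x.
Proof.
move=> xD suppS; split=> //; apply/fintype.subsetP => j xj; rewrite inE.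
by apply: contraT; rewrite negbK => jS; rewrite -(finset.in_set0 j) -suppS inE xj.
Qed.

Section Segment.
Variables (x : 'cV[R]_n) (i : 'I_n) (t : R).
Let y := (1 - t) *: x + t *: delta_mx i 0.

Lemma segmentE j : y j 0 = (1 - t) * x j 0 + t * (j == i)%:R.
Proof. by rewrite !mxE andbT. Qed.

Lemma simplex_segment : in_simplex x -> 0 <= t <= 1 -> in_simplex y.
Proof.
case=> x0 x1 /andP[t0 t1]; split=> [j|].
  by rewrite segmentE addr_ge0 // mulr_ge0 ?subr_ge0.
under eq_bigr do rewrite segmentE.
rewrite big_split /= -!mulr_sumr x1 (bigD1 i) //= eqxx big1 => [|j /negbTE->//].
by rewrite addr0 mulr1 mulr1 subrK.
Qed.

Lemma segment_dist j : in_simplex x -> 0 <= t -> `|y j 0 - x j 0| <= t.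
Proof.
move=> xD t0; have := simplex_le1 j xD; have [x0 _] := xD; have := x0 j.
rewrite segmentE ler_norml; case: (j == i) => /= ? ?; apply/andP; split; nra.
Qed.

End Segment.
End Simplex.

Section Gamma.
Variables (R : realType) (n : nat).
Implicit Types (M : 'M[R]_n) (x z : 'cV[R]_n) (S : {set 'I_n}).

Lemma minS_attained S (F : 'I_n -> R) : S != finset.set0 ->
  exists2 i, i \in S & minS S F = F i.
Proof.
rewrite /minS; case: pickP => [i0 i0S _ | noS /set0Pn[i]]; last by rewrite noS.
apply: (big_ind (fun v => exists2 i, i \in S & v = F i)) => [|_ _ [i iS ->] [j jS ->]|i iS].
- by exists i0.
- by case: (leP (F i) (F j)) => Fij; [exists i; rewrite ?min_l | exists j; rewrite ?min_r ?ltW].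
- by exists i.
Qed.

Lemma mul_le_sumsq z j k : (forall l, 0 <= z l 0) ->
  z j 0 * z k 0 <= \sum_l z l 0 ^+ 2.
Proof.
move=> z0; have sq_le l : z l 0 ^+ 2 <= \sum_l z l 0 ^+ 2.
  by rewrite (bigD1 l) //= lerDl sumr_ge0 // => ? _; apply: sqr_ge0.
case: (leP (z j 0) (z k 0)) => zjk.
  by apply: le_trans (sq_le k); rewrite expr2 ler_wpM2r.
by apply: le_trans (sq_le j); rewrite expr2 ler_wpM2l // ltW.
Qed.

Lemma qform_le_sum_entries M z : (forall i j, 0 <= M i j) ->
  (forall i, 0 <= z i 0) -> qform M z <= (\sum_j \sum_k M j k) * qform 1%:M z.
Proof.
move=> M0 z0; rewrite qform1E exchange_big /qform mxE mulr_suml; apply: ler_sum => k _.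
rewrite !mxE !mulr_suml; apply: ler_sum => j _; rewrite !mxE.
by rewrite mulrAC mulrC ler_wpM2l // mul_le_sumsq.
Qed.

Lemma ratio_le_sum_entries M z i : (forall i j, 0 <= M i j) ->
  (forall i, 0 <= z i 0) -> Defs.ratio M z i <= \sum_j \sum_k M j k.
Proof.
move=> M0 z0; rewrite /Defs.ratio; have [->|Qz] := eqVneq (qform 1%:M z) 0.
  by rewrite invr0 mulr0 sumr_ge0 // => j _; apply: sumr_ge0.
have Qz_gt0 : 0 < qform 1%:M z.
  by rewrite lt_def Qz qform1E sumr_ge0 // => k _; apply: sqr_ge0.
have Mz0 : 0 <= (M *m z) i 0 by rewrite mxE sumr_ge0 // => j _; apply: mulr_ge0.
have := qform_le_sum_entries M0 z0; rewrite ler_pdivrMr //; lra.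
Qed.

Lemma minS_ratio_le_gammaS M S x : (forall i j, 0 <= M i j) -> S != finset.set0 ->
  in_simplex_on (~: S) x -> minS S (Defs.ratio M x) <= gammaS M S.
Proof.
move=> M0 Sne xD; apply: ub_le_sup; last by exists x.
exists (\sum_j \sum_k M j k) => _ [z [[z0 _] _] <-].
by have [i _ ->] := minS_attained (Defs.ratio M z) Sne; exact: ratio_le_sum_entries.
Qed.

End Gamma.

Section Objective.
Variables (R : realType) (n : nat) (A : 'M[R]_n) (S : {set 'I_n}) (alpha : R).
Variable x : 'cV[R]_n.
Hypothesis x_vanish : forall j, j \in S -> x j 0 = 0.

Lemma hatI_sym : (hatI R S)^T = hatI R S.
Proof. by apply/matrixP => i j; rewrite !mxE eq_sym; case: eqP => // ->. Qed.

Lemma hatI_mul_vanish : hatI R S *m x = x.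
Proof.
apply/matrixP => j k; rewrite (ord1 k) mxE (bigD1 j) //= big1 => [|l /negbTE lj].
  rewrite addr0 mxE eqxx /=.
  by case: (boolP (j \in S)) => jS /=; rewrite ?mul1r // x_vanish // mulr0.
by rewrite /hatI mxE eq_sym lj mul0r.
Qed.

Lemma fSa_vanish : fSa A S alpha x = qform A x - alpha * qform 1%:M x.
Proof.
rewrite /fSa /qform mulmxBr mulmxBl -scalemxAr -scalemxAl -[_ *m hatI R S *m x]mulmxA.
rewrite hatI_mul_vanish mulmx1.
by set xAx := x^T *m A *m x; set xx := x^T *m x; rewrite !mxE.
Qed.

Lemma fSa_segment i t : A^T = A -> A i i = 0 -> i \in S ->
  fSa A S alpha ((1 - t) *: x + t *: delta_mx i 0) =
  (1 - t) ^+ 2 * fSa A S alpha x + 2 * t * (1 - t) * (A *m x) i 0.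
Proof.
move=> symA Aii iS; have symM : (A - alpha *: hatI R S)^T = A - alpha *: hatI R S.
  by rewrite linearB linearZ /= symA hatI_sym.
rewrite /fSa qform_segment // mulmxBl -scalemxAl hatI_mul_vanish.
by rewrite !mxE Aii x_vanish // iS andbF /= !(mulr0, subr0, sub0r, oppr0, addr0).
Qed.

End Objective.

Lemma segment_gain (R : realFieldType) (F a eps : R) : F < a -> 0 < eps ->
  exists t, [/\ 0 < t, t <= 1, t < eps & F < (1 - t) ^+ 2 * F + 2 * t * (1 - t) * a].
Proof.
(* The gain is t (2 (a - F) - t g) with g = 2 a - F, positive once t |g| < a - F. *)
move=> Fa eps0; set g := 2 * a - F.
set t := Num.min 1 (Num.min (eps / 2) ((a - F) / (`|g| + 1))).
have g1 : 0 < `|g| + 1 by rewrite ltr_pwDr.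
have t0 : 0 < t by rewrite !lt_min ltr01 divr_gt0 // divr_gt0 // subr_gt0.
have t1 : t <= 1 by rewrite ge_min lexx.
have teps : t <= eps / 2 by rewrite ge_min [X in _ || X]ge_min lexx orbT.
have tg : t * (`|g| + 1) <= a - F.
  by rewrite -ler_pdivlMr // ge_min [X in _ || X]ge_min lexx !orbT.
have tg_lt : t * g < 2 * (a - F).
  have := ler_wpM2l (ltW t0) (ler_norm g); lra.
exists t; split=> //; first lra.
rewrite /g in tg_lt; nra.
Qed.

Theorem proposition1 (R : realType) (n : nat) (A : 'M[R]_n) (S : {set 'I_n})
    (alpha : R) (x : 'cV[R]_n) :
  A^T = A ->
  (forall i j, 0 <= A i j) ->
  (forall i, A i i = 0) ->
  S != finset.set0 ->
  gammaS A S < alpha ->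
  local_max_simplex (fSa A S alpha) x ->
  supp x :&: S != finset.set0.
Proof.
move=> symA A0 A_diag0 Sne gamma_lt [xD [eps eps0 xmax]].
apply/negP => /eqP supp_disj.
have xS := simplex_on_setC xD supp_disj.
have x_vanish j : j \in S -> x j 0 = 0.
  by move=> jS; apply: simplex_on_vanish xS _; rewrite inE negbK.
have [i iS ratio_min] := minS_attained (Defs.ratio A x) Sne.
have ratio_lt : Defs.ratio A x i < alpha.
  by rewrite -ratio_min (le_lt_trans (minS_ratio_le_gammaS A0 Sne xS) gamma_lt).
have fx_lt : fSa A S alpha x < (A *m x) i 0.
  move: ratio_lt; rewrite /Defs.ratio ltr_pdivrMr ?qform1_simplex_gt0 //.
  rewrite fSa_vanish //; lra.
have [t [t0 t1 teps gain]] := segment_gain fx_lt eps0.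
have tI : 0 <= t <= 1 by rewrite (ltW t0) t1.
have := xmax _ (simplex_segment i xD tI)
  (fun j => le_lt_trans (segment_dist i j xD (ltW t0)) teps).
rewrite fSa_segment //; lra.
Qed.
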